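(* Let $N\ge 2$ and let $(\nu_r^{(1:N)})_{r\ge1}$ be vectors of non-negative integers with $\sum_i \nu_r^{(i)} = N$, with $c_N$, $D_N$, $\tau_N$ as defined below, and assume $\tau_N(u)<\infty$ for all $u\ge0$. Fix $t > 0$ and $l \in \mathbb{N}$. Then for any constant $B > 0$, $$\sum_{\substack{s_1,\dots,s_l=1\\\text{all distinct}}}^{\tau_N(t)}\prod_{j=1}^l\big[c_N(s_j) + BD_N(s_j)\big] \leq \sum_{\substack{s_1,\dots,s_l=1\\\text{all distinct}}}^{\tau_N(t)}\prod_{j=1}^l c_N(s_j) + \Bigg(\sum_{s=1}^{\tau_N(t)} D_N(s)\Bigg)(t+1)^{l-1}(1+B)^l.$$
   Context: $(x)_k$ is the falling factorial. $c_N(r) := \frac{1}{(N)_2}\sum_{i=1}^N(\nu_r^{(i)})_2$; $D_N(r) := \frac{1}{N(N)_2}\sum_{i=1}^N(\nu_r^{(i)})_2\{\nu_r^{(i)} + \frac1N\sum_{j\ne i}(\nu_r^{(j)})^2\}$; $\tau_N(u) := \inf\{s\in\{0,1,2,\dots\} : \sum_{r=1}^s c_N(r) \ge u\}$. *)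

From HB Require Import structures.
From mathcomp Require Import all_boot all_order all_algebra.
Set Implicit Arguments. Unset Strict Implicit. Unset Printing Implicit Defensive.
Import Order.TTheory GRing.Theory Num.Theory.
Local Open Scope ring_scope.

(* Family nu : generation r (r >= 1; index 0 unused) -> individual i in 'I_N -> count. *)

Definition ff2 (R : pzRingType) (x : nat) : R := x%:R * (x%:R - 1).

Definition cN (R : fieldType) (N : nat) (nu : nat -> 'I_N -> nat) (r : nat) : R :=
  (ff2 R N)^-1 * \sum_(i < N) ff2 R (nu r i).

Definition DN (R : fieldType) (N : nat) (nu : nat -> 'I_N -> nat) (r : nat) : R :=
  (N%:R * ff2 R N)^-1 *
  \sum_(i < N) ff2 R (nu r i) *
     ((nu r i)%:R + N%:R^-1 * \sum_(j < N | j != i) ((nu r j)%:R) ^+ 2).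

Definition csum (R : fieldType) (N : nat) (nu : nat -> 'I_N -> nat) (s : nat) : R :=
  \sum_(1 <= r < s.+1) cN R nu r.

Definition is_tauN (R : realFieldType) (N : nat) (nu : nat -> 'I_N -> nat)
    (u : R) (T : nat) : Prop :=
  u <= csum R nu T /\ forall s : nat, u <= csum R nu s -> (T <= s)%N.

(* Put [Y = \sum c_N] and [D = \sum D_N] over [1 <= r <= tau_N(t)].  Each
   difference of products is nonnegative, so the difference of the two sums over
   tuples of distinct indices is at most the same difference summed over all
   tuples, i.e. [(Y + B D) ^ l - Y ^ l].  Since [D_N <= c_N <= 1], minimality of
   [tau_N(t)] gives [D <= Y <= t + 1], and factoring the difference of powers bounds it
   by [D (t + 1) ^ (l - 1) ((1 + B) ^ l - 1)]. *)

From HB Require Import structures.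
From mathcomp Require Import all_boot all_order all_algebra.
From mathcomp Require Import ring lra.
Set Implicit Arguments. Unset Strict Implicit. Unset Printing Implicit Defensive.
Import Order.TTheory GRing.Theory Num.Theory.
Local Open Scope ring_scope.

Section RealAlgebra.
Variable R : realDomainType.

Lemma sum_sqr_le_sqr_sum (I : eqType) (r : seq I) (P : pred I) (F : I -> R) :
  (forall i, 0 <= F i) ->
  \sum_(i <- r | P i) F i ^+ 2 <= (\sum_(i <- r | P i) F i) ^+ 2.
Proof.
move=> F_ge0; elim: r => [|x r IH]; first by rewrite !big_nil expr0n.
rewrite !big_cons; case: (P x) => //.
have S_ge0 : 0 <= \sum_(i <- r | P i) F i by apply: sumr_ge0.
have := F_ge0 x; nra.
Qed.

Lemma expr_sum_ffun (I : finType) (F : I -> R) (l : nat) :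
  (\sum_i F i) ^+ l = \sum_(s : {ffun 'I_l -> I}) \prod_(j < l) F (s j).
Proof. by rewrite -[l in LHS]card_ord -prodr_const bigA_distr_bigA. Qed.

Lemma sum_prodD_subr_le (I : finType) (l : nat) (P : pred {ffun 'I_l -> I})
    (a b : I -> R) :
  (forall i, 0 <= a i) -> (forall i, 0 <= b i) ->
  \sum_(s | P s) \prod_(j < l) (a (s j) + b (s j))
    - \sum_(s | P s) \prod_(j < l) a (s j)
  <= (\sum_i (a i + b i)) ^+ l - (\sum_i a i) ^+ l.
Proof.
move=> a_ge0 b_ge0; rewrite !expr_sum_ffun -!sumrB.
have diff_ge0 (s : {ffun 'I_l -> I}) :
    0 <= \prod_(j < l) (a (s j) + b (s j)) - \prod_(j < l) a (s j).
  by rewrite subr_ge0; apply: ler_prod => j _; rewrite a_ge0 lerDl b_ge0.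
by rewrite [leRHS](bigID P) /= lerDl sumr_ge0.
Qed.

Lemma subrXX_addr_le (n : nat) (x d c B : R) :
  0 <= d -> d <= x -> x <= c -> 0 <= B ->
  (x + B * d) ^+ n.+1 - x ^+ n.+1 <= d * c ^+ n * ((1 + B) ^+ n.+1 - 1).
Proof.
move=> d_ge0 le_dx le_xc B_ge0.
have geom : (1 + B) ^+ n.+1 - 1 = B * \sum_(i < n.+1) (1 + B) ^+ (n - i).
  rewrite -[X in _ - X = _](expr1n R n.+1) subrXX [1 + B]addrC addrK /=.
  by congr (_ * _); apply: eq_bigr => i _; rewrite expr1n mulr1.
rewrite subrXX addrAC subrr add0r geom [d * _ * _]mulrC -!mulrA ler_wpM2l //.
rewrite mulrCA ler_wpM2l // mulr_suml ler_sum //= => i _.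
have le_in : (i <= n)%N by rewrite -ltnS.
have -> : c ^+ n = c ^+ (n - i) * c ^+ i by rewrite -exprD subnK.
rewrite mulrA -exprMn.
have x_ge0 : 0 <= x := le_trans d_ge0 le_dx.
apply: ler_pM; rewrite ?exprn_ge0 ?addr_ge0 ?mulr_ge0 //.
- by apply: lerXn2r; rewrite ?nnegrE; nra.
- by apply: lerXn2r; rewrite ?nnegrE; lra.
Qed.

End RealAlgebra.

Section CoalescentRates.
Variables (R : realFieldType) (N : nat) (nu : nat -> 'I_N -> nat).
Hypothesis HN : (2 <= N)%N.
Hypothesis Hsum : forall r : nat, (1 <= r)%N -> (\sum_(i < N) nu r i)%N = N.

Lemma ff2_ge0 (x : nat) : 0 <= ff2 R x.
Proof.
rewrite /ff2; case: x => [|x]; first by rewrite mul0r.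
by rewrite mulr_ge0 // -natr1 addrK.
Qed.

Lemma ff2_gt0 : 0 < ff2 R N.
Proof. by rewrite /ff2 mulr_gt0 ?subr_gt0 ?ltr1n ?ltr0n // ltnW. Qed.

Lemma cN_ge0 r : 0 <= cN R nu r.
Proof.
rewrite /cN mulr_ge0 ?invr_ge0 ?(ltW ff2_gt0) //.
by apply: sumr_ge0 => i _; apply: ff2_ge0.
Qed.

Lemma DN_ge0 r : 0 <= DN R nu r.
Proof.
rewrite /DN mulr_ge0 //; first by rewrite invr_ge0 mulr_ge0 ?(ltW ff2_gt0).
apply: sumr_ge0 => i _; rewrite mulr_ge0 ?ff2_ge0 ?addr_ge0 ?mulr_ge0 ?invr_ge0 //.
by apply: sumr_ge0 => j _; apply: sqr_ge0.
Qed.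

Lemma sum_nu r : (1 <= r)%N -> \sum_(i < N) (nu r i)%:R = N%:R :> R.
Proof. by move=> r_ge1; rewrite -natr_sum Hsum. Qed.

Lemma cN_le1 r : (1 <= r)%N -> cN R nu r <= 1.
Proof.
move=> r_ge1; rewrite /cN ler_pdivrMl ?ff2_gt0 // mulr1.
have -> : \sum_(i < N) ff2 R (nu r i)
    = \sum_(i < N) (nu r i)%:R ^+ 2 - \sum_(i < N) (nu r i)%:R.
  by rewrite -sumrB; apply: eq_bigr => i _; rewrite /ff2; ring.
have := sum_sqr_le_sqr_sum (index_enum 'I_N) predT (fun i => ler0n R (nu r i)).
by rewrite sum_nu // /ff2; nra.
Qed.

Lemma DN_le_cN r : (1 <= r)%N -> DN R nu r <= cN R nu r.
Proof.
move=> r_ge1; have N_gt0 : 0 < N%:R :> R by rewrite ltr0n ltnW.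
rewrite /DN /cN invfM -!mulrA ler_pdivrMl // mulrCA.
rewrite ler_wpM2l ?invr_ge0 ?(ltW ff2_gt0) // mulr_sumr ler_sum // => i _.
rewrite [leRHS]mulrC ler_wpM2l ?ff2_ge0 //.
pose S := \sum_(j < N | j != i) (nu r j)%:R :> R.
set Q := \sum_(j < N | j != i) (nu r j)%:R ^+ 2.
have nu_i_S : (nu r i)%:R + S = N%:R :> R by rewrite -(sum_nu r_ge1) (bigD1 i).
have S_ge0 : 0 <= S by apply: sumr_ge0.
have Q_le : N%:R^-1 * Q <= S.
  rewrite ler_pdivrMl // (le_trans (sum_sqr_le_sqr_sum _ _ _)) // expr2.
  by rewrite ler_wpM2r // -nu_i_S lerDr.
have := ler0n R (nu r i); lra.
Qed.

Lemma csum_tau_le (t : R) (T : nat) :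
  0 <= t -> is_tauN nu t T -> csum R nu T <= t + 1.
Proof.
case: T => [|T] t_ge0 [_ tau_min]; first by rewrite /csum big_geq //; lra.
have below : csum R nu T < t.
  by rewrite real_ltNge ?num_real //; apply/negP => /tau_min; rewrite ltnn.
have -> : csum R nu T.+1 = csum R nu T + cN R nu T.+1 by rewrite /csum big_nat_recr.
have := cN_le1 (ltn0Sn T); lra.
Qed.

End CoalescentRates.

Theorem lemma5 (R : realFieldType) (N : nat) (nu : nat -> 'I_N -> nat)
  (HN : (2 <= N)%N)
  (Hsum : forall r : nat, (1 <= r)%N -> (\sum_(i < N) nu r i)%N = N)
  (Htau_fin : forall u : R, 0 <= u -> exists T : nat, is_tauN nu u T)
  (t : R) (l : nat) (T : nat) (B : R)
  (Ht : 0 < t) (HT : is_tauN nu t T) (HB : 0 < B) :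
  \sum_(s : {ffun 'I_l -> 'I_T} | injectiveb s)
      \prod_(j < l) (cN R nu (s j).+1 + B * DN R nu (s j).+1)
  <= \sum_(s : {ffun 'I_l -> 'I_T} | injectiveb s)
      \prod_(j < l) cN R nu (s j).+1
     + (\sum_(1 <= r < T.+1) DN R nu r) * (t + 1) ^ (l%:Z - 1) * (1 + B) ^+ l.
Proof.
set Y := \sum_(r < T) cN R nu r.+1.
set D := \sum_(r < T) DN R nu r.+1.
have sumD : \sum_(1 <= r < T.+1) DN R nu r = D by rewrite big_add1 big_mkord.
have sumY : csum R nu T = Y by rewrite /csum big_add1 big_mkord.
have D_ge0 : 0 <= D by apply: sumr_ge0 => r _; apply: DN_ge0.
have le_DY : D <= Y by apply: ler_sum => r _; apply: DN_le_cN.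
have le_Yt : Y <= t + 1 by rewrite -sumY csum_tau_le // ltW.
rewrite sumD -lerBlDl.
apply: le_trans (sum_prodD_subr_le (fun s => injectiveb s)
  (fun r : 'I_T => cN_ge0 R nu HN r.+1)
  (fun r : 'I_T => mulr_ge0 (ltW HB) (DN_ge0 R nu HN r.+1))) _.
have -> : \sum_(r < T) (cN R nu r.+1 + B * DN R nu r.+1) = Y + B * D.
  by rewrite big_split mulr_sumr.
case: l => [|n]; first by rewrite !expr0 subrr mulr1 mulr_ge0 // exprz_ge0 //; lra.
have -> : n.+1%:Z - 1 = n by rewrite -addn1 PoszD addrK.
apply: le_trans (subrXX_addr_le n D_ge0 le_DY le_Yt (ltW HB)) _.
by rewrite ler_wpM2l ?mulr_ge0 ?exprn_ge0 ?gerBl //; lra.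
Qed.
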